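(* Let $A$ be a random variable with values in $\{u,v\}$, $\mathbb{P}(A=u)=p_u$, $\mathbb{P}(A=v)=p_v$, $p_u+p_v=1$, and let $(U,V)$ be a random vector independent of $A$ that is bivariate normal with $\mathbb{E}[U]=\mathbb{E}[V]=\mu<0$, $\operatorname{Var}(U)=\operatorname{Var}(V)=\sigma^2$ with $\sigma>0$, and correlation $\rho$. For $z\in\mathbb{R}$ define \[f(z)=\mathbb{P}(A=u)\,\mathbb{P}(U>z)\,\mathbb{E}[U+V\mid U>z]+\mathbb{P}(A=v)\,\mathbb{P}(V>z)\,\mathbb{E}[U+V\mid V>z]\] (equivalently $f(z)=\mathbb{E}[D(U+V)]$ with $D=\mathbb{I}(A=u,U>z)+\mathbb{I}(A=v,V>z)$). If $\rho\in(-1,1)$, then $f'(0)>0$, $f$ attains its maximum at \[z^*=\frac{\rho-1}{\rho+1}\,\mu,\] and $f(z^* )>0$.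
   Context: $z$ is a hurdle rate: an innovation is adopted iff its effect on the primary dimension $A$ exceeds $z$. $f(z)$ is the long-run average overall performance of the firm under this rule. *)

From Stdlib Require Import Reals Lra.
From Coquelicot Require Import Coquelicot.
Open Scope R_scope.

Definition binorm_density (mu sigma rho x y : R) : R :=
  / (2 * PI * sigma ^ 2 * sqrt (1 - rho ^ 2)) *
  exp (- ((x - mu) ^ 2 - 2 * rho * (x - mu) * (y - mu) + (y - mu) ^ 2)
        / (2 * sigma ^ 2 * (1 - rho ^ 2))).

(* E[(U+V) 1{U > z}] = P(U>z) E[U+V | U>z] : integrate x = U over (z,+oo),
   y = V over R. *)
Definition E_sum_U_gt (mu sigma rho z : R) : R :=
  RInt_gen
    (fun x => RInt_gen (fun y => (x + y) * binorm_density mu sigma rho x y)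
                       (Rbar_locally m_infty) (Rbar_locally p_infty))
    (at_point z) (Rbar_locally p_infty).

(* E[(U+V) 1{V > z}] = P(V>z) E[U+V | V>z] : integrate y = V over (z,+oo),
   x = U over R. *)
Definition E_sum_V_gt (mu sigma rho z : R) : R :=
  RInt_gen
    (fun y => RInt_gen (fun x => (x + y) * binorm_density mu sigma rho x y)
                       (Rbar_locally m_infty) (Rbar_locally p_infty))
    (at_point z) (Rbar_locally p_infty).

Definition perf (pu pv mu sigma rho z : R) : R :=
  pu * E_sum_U_gt mu sigma rho z + pv * E_sum_V_gt mu sigma rho z.

From Stdlib Require Import Reals Lra Classical_Prop FunctionalExtensionality.
From Coquelicot Require Import Coquelicot.
Open Scope R_scope.

(* Completing the square, the density of (U, V) is a Gaussian in U times a
   Gaussian in V centred at E[V | U = x] = mu + rho (x - mu).  Integrating V out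
   gives E[(U + V) 1{U > z}] = c * int_z^oo (x - z_* ) exp (-(x - mu)^2 / (2 sigma^2)) dx
   with c > 0, and the V-term equals the U-term by symmetry of the density, so
   f(z) = c (F(+oo) - F(z)) for a primitive F whose derivative has the sign of
   x - z_*.  Hence f increases up to z_* and decreases after it, f'(0) > 0
   because z_* > 0, and f(z_* ) = c (F(+oo) - F(z_* )) > 0.  The Gaussian
   integrals are never evaluated: only their finiteness and positivity enter. *)

Lemma ex_finite_lim_incr_bounded (F : R -> R) (M : R) :
  (forall x y, x <= y -> F x <= F y) -> (forall x, F x <= M) ->
  ex_finite_lim F p_infty.
Proof.
  intros F_incr F_le.
  destruct (completeness (fun v => exists x, v = F x)) as [l [l_ub l_least]].
  - exists M. intros v [x ->]. apply F_le.
  - exists (F 0). now exists 0.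
  - exists l. intros P [eps HP].
    assert (exists x0, l - eps < F x0) as [x0 Hx0].
    { apply NNPP. intros Hn.
      assert (l <= l - eps); [|destruct eps; simpl in *; lra].
      apply l_least. intros v [x ->].
      apply Rnot_lt_le. intros Hx. apply Hn. now exists x. }
    exists x0. intros y Hy. apply HP.
    assert (F y <= l) by (apply l_ub; now exists y).
    assert (F x0 <= F y) by (apply F_incr; lra).
    change (Rabs (F y - l) < eps). apply Rabs_def1; lra.
Qed.

Lemma is_lim_shift (f : R -> R) (m : R) (x l : Rbar) :
  x = p_infty \/ x = m_infty -> is_lim f x l -> is_lim (fun y => f (y - m)) x l.
Proof.
  intros Hx Hf. apply (is_lim_comp f (fun y => y - m) x l x Hf).
  - eapply is_lim_minus; [apply is_lim_id | apply is_lim_const |].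
    destruct Hx as [-> | ->]; easy.
  - destruct Hx as [-> | ->]; apply filter_forall; easy.
Qed.

Lemma filterlim_at_point (f : R -> R) (z : R) : filterlim f (at_point z) (locally (f z)).
Proof. intros P HP. exact (locally_singleton _ _ HP). Qed.

Lemma is_RInt_gen_derive_lim {Fa Fb} {FFa : Filter Fa} {FFb : Filter Fb}
    (F f : R -> R) (la lb : R) :
  (forall x, is_derive F x (f x)) -> (forall x, continuous f x) ->
  filterlim F Fa (locally la) -> filterlim F Fb (locally lb) ->
  is_RInt_gen f Fa Fb (lb - la).
Proof.
  intros F_deriv f_cont Ha Hb.
  assert (DerF : forall x, Derive F x = f x) by (intros; now apply is_derive_unique).
  apply is_RInt_gen_ext with (Derive F).
  { apply filter_forall. intros ab x _. apply DerF. }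
  apply is_RInt_gen_Derive; auto; apply filter_forall; intros ab x _.
  - eexists; apply F_deriv.
  - rewrite (functional_extensionality _ _ DerF). apply f_cont.
Qed.

Section Derivative_sign.

Variables (F w : R -> R) (z0 : R).
Hypothesis F_deriv : forall x, is_derive F x ((x - z0) * w x).
Hypothesis w_pos : forall x, 0 < w x.

Lemma derive_sign_min (y : R) : F z0 <= F y.
Proof.
  destruct (MVT_gen F z0 y (fun x => (x - z0) * w x)) as [c [Hc HFy]].
  - intros x _. apply F_deriv.
  - intros x _. apply continuity_pt_filterlim, (@ex_derive_continuous R_AbsRing R_NormedModule).
    eexists; apply F_deriv.
  - assert (0 <= (c - z0) * (y - z0)).
    { revert Hc. unfold Rmin, Rmax.
      destruct (Rle_dec z0 y); intros; nra. }
    pose proof (w_pos c). nra.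
Qed.

Lemma derive_sign_incr (x y : R) : z0 < x -> x < y -> F x < F y.
Proof.
  intros Hx Hxy.
  apply (incr_function F z0 p_infty (fun x => (x - z0) * w x)); [| |easy..].
  - intros t _ _. apply F_deriv.
  - intros t Ht _. simpl in Ht. pose proof (w_pos t). nra.
Qed.

Lemma derive_sign_lt_lim (l : R) : is_lim F p_infty l -> F z0 < l.
Proof.
  intros HF.
  assert (Hle : Rbar_le (F (z0 + 2)) l).
  { apply (is_lim_le_loc (fun _ => F (z0 + 2)) F p_infty); [|apply is_lim_const | exact HF].
    exists (z0 + 2). intros y Hy. left. apply derive_sign_incr; lra. }
  pose proof (derive_sign_min (z0 + 1)).
  pose proof (derive_sign_incr (z0 + 1) (z0 + 2)). simpl in Hle. lra.
Qed.

End Derivative_sign.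

Definition gauss (D t : R) : R := exp (- t ^ 2 / D).
Definition gauss_prim (D Y : R) : R := RInt (gauss D) 0 Y.
(* [gauss_half D = sqrt (PI * D) / 2]; only its positivity is used. *)
Definition gauss_half (D : R) : R := real (Lim (gauss_prim D) p_infty).

Lemma continuous_gauss (D t : R) : continuous (gauss D) t.
Proof.
  apply (@ex_derive_continuous R_AbsRing R_NormedModule). unfold gauss. auto_derive. easy.
Qed.

Lemma ex_RInt_gauss (D a b : R) : ex_RInt (gauss D) a b.
Proof. apply (@ex_RInt_continuous R_CompleteNormedModule). intros; apply continuous_gauss. Qed.

Lemma is_derive_gauss_prim (D Y : R) : is_derive (gauss_prim D) Y (gauss D Y).
Proof.
  apply is_derive_RInt with 0; [|apply continuous_gauss].
  apply filter_forall. intros b. apply (@RInt_correct R_CompleteNormedModule), ex_RInt_gauss.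
Qed.

Lemma gauss_prim0 (D : R) : gauss_prim D 0 = 0.
Proof. exact (RInt_point 0 (gauss D)). Qed.

Lemma gauss_prim_incr (D x y : R) : x < y -> gauss_prim D x < gauss_prim D y.
Proof.
  intros Hxy. apply (incr_function _ m_infty p_infty (gauss D)); [| |easy|exact Hxy|easy].
  - intros t _ _. apply is_derive_gauss_prim.
  - intros t _ _. apply exp_pos.
Qed.

Lemma gauss_prim_opp (D Y : R) : gauss_prim D (- Y) = - gauss_prim D Y.
Proof.
  unfold gauss_prim.
  replace 0 with (-1 * 0 + 0) at 1 by ring. replace (- Y) with (-1 * Y + 0) by ring.
  rewrite <- RInt_comp_lin by (apply ex_RInt_gauss).
  transitivity (RInt (fun t => scal (-1) (gauss D t)) 0 Y).
  - apply RInt_ext. intros t _. unfold gauss. do 3 f_equal. ring.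
  - rewrite (@RInt_scal R_CompleteNormedModule) by (apply ex_RInt_gauss).
    unfold scal. simpl. unfold mult. simpl. ring.
Qed.

(* On [0, Y] the integrand is dominated by [exp ((1 - 2 t) / D)], since [t^2 >= 2 t - 1]. *)
Lemma gauss_prim_le (D Y : R) : 0 < D -> gauss_prim D Y <= D / 2 * exp (1 / D).
Proof.
  intros HD. pose proof (exp_pos (1 / D)).
  destruct (Rle_lt_dec Y 0) as [HY | HY].
  { assert (gauss_prim D Y <= gauss_prim D 0).
    { destruct HY as [HY | ->]; [left; now apply gauss_prim_incr | right; reflexivity]. }
    rewrite gauss_prim0 in *. nra. }
  set (E := fun t => - (D / 2) * exp ((1 - 2 * t) / D)).
  assert (HE : is_RInt (fun t => exp ((1 - 2 * t) / D)) 0 Y (E Y - E 0)).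
  { apply (is_RInt_derive E); intros x _.
    - unfold E. auto_derive; [easy | unfold Rminus, Rdiv; field; lra].
    - apply (@ex_derive_continuous R_AbsRing R_NormedModule). auto_derive. easy. }
  apply Rle_trans with (E Y - E 0).
  - rewrite <- (is_RInt_unique _ _ _ _ HE).
    apply RInt_le; [lra | apply ex_RInt_gauss | eexists; exact HE |].
    intros t _.
    assert (Ht : - t ^ 2 / D <= (1 - 2 * t) / D).
    { pose proof (pow2_ge_0 (t - 1)).
      apply Rmult_le_compat_r; [left; apply Rinv_0_lt_compat; lra | nra]. }
    unfold gauss. destruct Ht as [Ht | ->]; [left; now apply exp_increasing | right; reflexivity].
  - unfold E. pose proof (exp_pos ((1 - 2 * Y) / D)).
    replace ((1 - 2 * 0) / D) with (1 / D) by (f_equal; ring). nra.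
Qed.

Lemma is_lim_gauss_prim_p (D : R) : 0 < D -> is_lim (gauss_prim D) p_infty (gauss_half D).
Proof.
  intros HD.
  assert (Hex : ex_finite_lim (gauss_prim D) p_infty).
  { apply (ex_finite_lim_incr_bounded _ (D / 2 * exp (1 / D))).
    - intros x y [Hxy | ->]; [left; now apply gauss_prim_incr | now right].
    - intros Y. now apply gauss_prim_le. }
  destruct Hex as [l Hl].
  unfold gauss_half. now rewrite (is_lim_unique _ _ _ Hl).
Qed.

Lemma is_lim_gauss_prim_m (D : R) : 0 < D -> is_lim (gauss_prim D) m_infty (- gauss_half D).
Proof.
  intros HD.
  apply is_lim_ext with (fun Y => - gauss_prim D (- Y)).
  { intros Y. rewrite gauss_prim_opp. ring. }
  apply (is_lim_opp _ m_infty (gauss_half D)).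
  apply (is_lim_comp _ Ropp m_infty (gauss_half D) p_infty).
  - now apply is_lim_gauss_prim_p.
  - apply (is_lim_opp (fun y => y) m_infty m_infty), is_lim_id.
  - apply filter_forall. easy.
Qed.

Lemma gauss_half_pos (D : R) : 0 < D -> 0 < gauss_half D.
Proof.
  intros HD.
  assert (H1 : 0 < gauss_prim D 1) by (rewrite <- (gauss_prim0 D); apply gauss_prim_incr; lra).
  assert (Hle : Rbar_le (gauss_prim D 1) (gauss_half D)).
  { apply (is_lim_le_loc (fun _ => gauss_prim D 1) (gauss_prim D) p_infty);
      [|apply is_lim_const | now apply is_lim_gauss_prim_p].
    exists 1. intros y Hy. left. now apply gauss_prim_incr. }
  simpl in Hle. lra.
Qed.

Lemma is_lim_gauss (D : R) (x : Rbar) :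
  0 < D -> x = p_infty \/ x = m_infty -> is_lim (gauss D) x 0.
Proof.
  intros HD Hx.
  apply (is_lim_comp exp (fun t => - t ^ 2 / D) x 0 m_infty).
  - exact is_lim_exp_m.
  - apply is_lim_ext with (fun t => (- / D) * (t * t)).
    { intros t. unfold Rdiv. ring. }
    replace m_infty with (Rbar_mult (- / D) (Rbar_mult x x)).
    + apply is_lim_scal_l, is_lim_mult; try apply is_lim_id.
      destruct Hx as [-> | ->]; easy.
    + assert (0 < / D) by now apply Rinv_0_lt_compat.
      destruct Hx as [-> | ->]; simpl; destruct (Rle_dec 0 (- / D)); try easy; exfalso; lra.
  - destruct Hx as [-> | ->]; apply filter_forall; easy.
Qed.

Definition lin_gauss (a m D y : R) : R := (a + y) * gauss D (y - m).
Definition lin_gauss_prim (a m D y : R) : R :=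
  (a + m) * gauss_prim D (y - m) - D / 2 * gauss D (y - m).

Section Linear_times_gauss.

Variables (a m D : R).
Hypothesis D_pos : 0 < D.

Lemma continuous_lin_gauss (y : R) : continuous (lin_gauss a m D) y.
Proof.
  apply (@ex_derive_continuous R_AbsRing R_NormedModule).
  unfold lin_gauss, gauss. auto_derive. easy.
Qed.

Lemma is_derive_lin_gauss_prim (y : R) :
  is_derive (lin_gauss_prim a m D) y (lin_gauss a m D y).
Proof.
  pose proof (is_derive_gauss_prim D (y - m)) as Hprim.
  unfold lin_gauss_prim, gauss. auto_derive.
  - eexists; exact Hprim.
  - erewrite is_derive_unique by exact Hprim.
    unfold lin_gauss, gauss, Rminus, Rdiv.
    replace (- ((y + - m) * ((y + - m) * 1)) * / D) with (- (y + - m) ^ 2 * / D) by ring.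
    field. lra.
Qed.

Lemma is_lim_lin_gauss_prim_p :
  is_lim (lin_gauss_prim a m D) p_infty ((a + m) * gauss_half D).
Proof.
  replace ((a + m) * gauss_half D) with ((a + m) * gauss_half D - D / 2 * 0) by ring.
  apply is_lim_minus';
    [apply (is_lim_scal_l _ _ p_infty (gauss_half D)) | apply (is_lim_scal_l _ _ p_infty 0)];
    (apply is_lim_shift; [now (left + right) |]).
  - now apply is_lim_gauss_prim_p.
  - apply is_lim_gauss; [exact D_pos | now left].
Qed.

Lemma is_lim_lin_gauss_prim_m :
  is_lim (lin_gauss_prim a m D) m_infty ((a + m) * - gauss_half D).
Proof.
  replace ((a + m) * - gauss_half D) with ((a + m) * - gauss_half D - D / 2 * 0) by ring.
  apply is_lim_minus';
    [apply (is_lim_scal_l _ _ m_infty (- gauss_half D)) | apply (is_lim_scal_l _ _ m_infty 0)];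
    (apply is_lim_shift; [now (left + right) |]).
  - now apply is_lim_gauss_prim_m.
  - apply is_lim_gauss; [exact D_pos | now right].
Qed.

Lemma is_RInt_gen_lin_gauss :
  is_RInt_gen (lin_gauss a m D) (Rbar_locally m_infty) (Rbar_locally p_infty)
    (2 * (a + m) * gauss_half D).
Proof.
  replace (2 * (a + m) * gauss_half D)
    with ((a + m) * gauss_half D - (a + m) * - gauss_half D) by ring.
  apply (is_RInt_gen_derive_lim (lin_gauss_prim a m D)).
  - exact is_derive_lin_gauss_prim.
  - exact continuous_lin_gauss.
  - exact is_lim_lin_gauss_prim_m.
  - exact is_lim_lin_gauss_prim_p.
Qed.

Lemma is_RInt_gen_lin_gauss_gt (z : R) :
  is_RInt_gen (lin_gauss a m D) (at_point z) (Rbar_locally p_infty)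
    ((a + m) * gauss_half D - lin_gauss_prim a m D z).
Proof.
  apply (is_RInt_gen_derive_lim (lin_gauss_prim a m D)).
  - exact is_derive_lin_gauss_prim.
  - exact continuous_lin_gauss.
  - apply filterlim_at_point.
  - exact is_lim_lin_gauss_prim_p.
Qed.

End Linear_times_gauss.

Definition binorm_norm (sigma rho : R) : R := / (2 * PI * sigma ^ 2 * sqrt (1 - rho ^ 2)).

Lemma binorm_norm_pos (sigma rho : R) : 0 < sigma -> -1 < rho < 1 -> 0 < binorm_norm sigma rho.
Proof.
  intros Hs Hr. apply Rinv_0_lt_compat.
  assert (0 < sqrt (1 - rho ^ 2)) by (apply sqrt_lt_R0; nra).
  pose proof PI_RGT_0. assert (0 < sigma ^ 2) by nra.
  apply Rmult_lt_0_compat; [apply Rmult_lt_0_compat; [apply Rmult_lt_0_compat|]|]; lra.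
Qed.

(* Given [U = x], [V] is normal with mean [mu + rho (x - mu)] and variance
   [sigma^2 (1 - rho^2)]. *)
Lemma binorm_density_factor (mu sigma rho x y : R) : 0 < sigma -> -1 < rho < 1 ->
  binorm_density mu sigma rho x y =
  binorm_norm sigma rho * gauss (2 * sigma ^ 2) (x - mu) *
  gauss (2 * sigma ^ 2 * (1 - rho ^ 2)) (y - (mu + rho * (x - mu))).
Proof.
  intros Hs Hr. unfold binorm_density, binorm_norm, gauss.
  rewrite (Rmult_assoc (/ _)), <- exp_plus. do 2 f_equal.
  assert (0 < 1 - rho ^ 2) by nra. field. split; lra.
Qed.

Lemma binorm_density_sym (mu sigma rho x y : R) :
  binorm_density mu sigma rho x y = binorm_density mu sigma rho y x.
Proof. unfold binorm_density. do 4 f_equal. ring. Qed.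

Lemma is_RInt_gen_binorm_sum (mu sigma rho x : R) : 0 < sigma -> -1 < rho < 1 ->
  is_RInt_gen (fun y => (x + y) * binorm_density mu sigma rho x y)
    (Rbar_locally m_infty) (Rbar_locally p_infty)
    (binorm_norm sigma rho * gauss (2 * sigma ^ 2) (x - mu) *
     (2 * (x + (mu + rho * (x - mu))) * gauss_half (2 * sigma ^ 2 * (1 - rho ^ 2)))).
Proof.
  intros Hs Hr.
  assert (HD : 0 < 2 * sigma ^ 2 * (1 - rho ^ 2)) by (apply Rmult_lt_0_compat; nra).
  eapply is_RInt_gen_ext;
    [|exact (is_RInt_gen_scal _ (binorm_norm sigma rho * gauss (2 * sigma ^ 2) (x - mu))
               _ (is_RInt_gen_lin_gauss x (mu + rho * (x - mu)) _ HD))].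
  apply filter_forall. intros ab y _.
  rewrite binorm_density_factor by assumption.
  unfold lin_gauss, scal. simpl. unfold mult. simpl. ring.
Qed.

Definition opt_hurdle (mu rho : R) : R := (rho - 1) / (rho + 1) * mu.

Definition perf_scale (sigma rho : R) : R :=
  2 * (1 + rho) * binorm_norm sigma rho * gauss_half (2 * sigma ^ 2 * (1 - rho ^ 2)).

Lemma perf_scale_pos (sigma rho : R) : 0 < sigma -> -1 < rho < 1 -> 0 < perf_scale sigma rho.
Proof.
  intros Hs Hr. unfold perf_scale.
  pose proof (binorm_norm_pos sigma rho Hs Hr).
  assert (0 < gauss_half (2 * sigma ^ 2 * (1 - rho ^ 2))).
  { apply gauss_half_pos, Rmult_lt_0_compat; nra. }
  repeat apply Rmult_lt_0_compat; lra.
Qed.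

(* Integrating [y] out leaves a density proportional to
   [(x + E[V | U = x]) gauss (x - mu) = (1 + rho) (x - opt_hurdle mu rho) gauss (x - mu)]. *)
Lemma E_sum_U_gt_eq (mu sigma rho z : R) : 0 < sigma -> -1 < rho < 1 ->
  E_sum_U_gt mu sigma rho z =
  perf_scale sigma rho *
  ((- opt_hurdle mu rho + mu) * gauss_half (2 * sigma ^ 2)
   - lin_gauss_prim (- opt_hurdle mu rho) mu (2 * sigma ^ 2) z).
Proof.
  intros Hs Hr.
  assert (HD : 0 < 2 * sigma ^ 2) by nra.
  transitivity
    (RInt_gen (fun x => perf_scale sigma rho * lin_gauss (- opt_hurdle mu rho) mu (2 * sigma ^ 2) x)
       (at_point z) (Rbar_locally p_infty)).
  - unfold E_sum_U_gt. f_equal. apply functional_extensionality. intros x.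
    apply is_RInt_gen_unique.
    replace (perf_scale sigma rho * lin_gauss (- opt_hurdle mu rho) mu (2 * sigma ^ 2) x)
      with (binorm_norm sigma rho * gauss (2 * sigma ^ 2) (x - mu) *
            (2 * (x + (mu + rho * (x - mu))) * gauss_half (2 * sigma ^ 2 * (1 - rho ^ 2)))).
    + now apply is_RInt_gen_binorm_sum.
    + unfold perf_scale, lin_gauss, opt_hurdle. field. lra.
  - apply is_RInt_gen_unique.
    exact (is_RInt_gen_scal _ (perf_scale sigma rho) _ (is_RInt_gen_lin_gauss_gt _ _ _ HD z)).
Qed.

Lemma perf_eq (pu pv mu sigma rho z : R) : pu + pv = 1 -> 0 < sigma -> -1 < rho < 1 ->
  perf pu pv mu sigma rho z =
  perf_scale sigma rho *
  ((- opt_hurdle mu rho + mu) * gauss_half (2 * sigma ^ 2)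
   - lin_gauss_prim (- opt_hurdle mu rho) mu (2 * sigma ^ 2) z).
Proof.
  intros Hp Hs Hr.
  assert (HVU : E_sum_V_gt mu sigma rho z = E_sum_U_gt mu sigma rho z).
  { unfold E_sum_V_gt, E_sum_U_gt. f_equal. apply functional_extensionality. intros x.
    f_equal. apply functional_extensionality. intros y.
    rewrite binorm_density_sym. ring. }
  unfold perf. rewrite HVU, E_sum_U_gt_eq by assumption.
  replace pv with (1 - pu) by lra. ring.
Qed.

Lemma is_derive_perf (pu pv mu sigma rho z : R) : pu + pv = 1 -> 0 < sigma -> -1 < rho < 1 ->
  is_derive (perf pu pv mu sigma rho) z
    (perf_scale sigma rho * ((opt_hurdle mu rho - z) * gauss (2 * sigma ^ 2) (z - mu))).
Proof.
  intros Hp Hs Hr.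
  set (F := lin_gauss_prim (- opt_hurdle mu rho) mu (2 * sigma ^ 2)).
  set (Fsup := (- opt_hurdle mu rho + mu) * gauss_half (2 * sigma ^ 2)).
  apply is_derive_ext with (fun z => perf_scale sigma rho * (Fsup - F z)).
  { intros t. symmetry. now apply perf_eq. }
  replace ((opt_hurdle mu rho - z) * gauss (2 * sigma ^ 2) (z - mu))
    with (0 - lin_gauss (- opt_hurdle mu rho) mu (2 * sigma ^ 2) z) by (unfold lin_gauss; ring).
  apply is_derive_scal.
  refine (is_derive_minus (fun _ => Fsup) F z zero _ (is_derive_const Fsup z) _).
  apply is_derive_lin_gauss_prim. nra.
Qed.

Lemma opt_hurdle_pos (mu rho : R) : mu < 0 -> -1 < rho < 1 -> 0 < opt_hurdle mu rho.
Proof.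
  intros Hmu Hr. unfold opt_hurdle.
  replace ((rho - 1) / (rho + 1) * mu) with ((1 - rho) / (rho + 1) * - mu) by (field; lra).
  apply Rmult_lt_0_compat; [apply Rdiv_lt_0_compat|]; lra.
Qed.

Theorem proposition2 (pu pv mu sigma rho : R) :
  0 <= pu -> 0 <= pv -> pu + pv = 1 ->
  mu < 0 -> 0 < sigma -> -1 < rho < 1 ->
  (exists l, is_derive (perf pu pv mu sigma rho) 0 l /\ 0 < l) /\
  (forall z, perf pu pv mu sigma rho z <= perf pu pv mu sigma rho ((rho - 1) / (rho + 1) * mu)) /\
  0 < perf pu pv mu sigma rho ((rho - 1) / (rho + 1) * mu).
Proof.
  intros _ _ Hp Hmu Hs Hr.
  change ((rho - 1) / (rho + 1) * mu) with (opt_hurdle mu rho).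
  set (zs := opt_hurdle mu rho).
  set (D := 2 * sigma ^ 2).
  set (F := lin_gauss_prim (- zs) mu D).
  assert (HD : 0 < D) by (unfold D; nra).
  assert (HF : forall x, is_derive F x ((x - zs) * gauss D (x - mu))).
  { intros x. replace (x - zs) with (- zs + x) by ring. now apply is_derive_lin_gauss_prim. }
  pose proof (perf_scale_pos sigma rho Hs Hr) as Hc.
  pose proof (opt_hurdle_pos mu rho Hmu Hr) as Hzs.
  split; [|split].
  - eexists. split; [now apply is_derive_perf|].
    apply Rmult_lt_0_compat; [lra | apply Rmult_lt_0_compat; [lra | apply exp_pos]].
  - intros z. rewrite !(perf_eq pu pv mu sigma rho) by assumption.
    apply Rmult_le_compat_l; [lra|].
    pose proof (derive_sign_min F (fun x => gauss D (x - mu)) zs HF (fun x => exp_pos _) z).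
    fold zs D F. lra.
  - rewrite perf_eq by assumption. apply Rmult_lt_0_compat; [lra|].
    apply Rlt_Rminus, (derive_sign_lt_lim F (fun x => gauss D (x - mu)) zs HF (fun x => exp_pos _)).
    now apply is_lim_lin_gauss_prim_p.
Qed.
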